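(* Let $0<a_1\le a_2$, $q\ge2$, and let $e_1,e_2,\ldots$ be non-negative integers with $a_1q^n/n\le e_n\le a_2q^n/n$ for all $n\ge1$. Define $c_{i,j}$ by the formal power series identity $$\sum_{i,j\ge0} c_{i,j}x^iy^j = \prod_{i=1}^\infty (1-x^iy)^{-e_i}.$$ Then there exist constants $C$ and $D>1$ depending only on $a_1$ and $a_2$ such that for all integers $n\ge1$ and $0\le m\le n$, $$\frac{\sum_{j=m+1}^n c_{n,j}}{\sum_{j=0}^n c_{n,j}} \le n^C D^{-m}.$$ *)

From mathcomp Require Import all_boot.
From Stdlib Require Import Reals.

Set Implicit Arguments.
Unset Strict Implicit.
Unset Printing Implicit Defensive.

(* Coefficient of t^k in (1 - t)^{-e}: the multiset coefficient
   binom(e+k-1, k) (equal to 1 for k = 0, and to 0 for e = 0, k >= 1). *)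
Definition multichoose (e k : nat) : nat := 'C(e + k - 1, k).

(* trunc_coef e N a b = coefficient of x^a y^b in the finite product
   prod_{i=1}^{N} (1 - x^i y)^{-e_i}
   = prod_{i=1}^{N} sum_{k>=0} multichoose (e i) k * x^(i k) y^k. *)
Fixpoint trunc_coef (e : nat -> nat) (N a b : nat) {struct N} : nat :=
  match N with
  | 0 => ((a == 0) && (b == 0) : nat)
  | N'.+1 =>
      \sum_(0 <= k < a.+1 | (N'.+1 * k <= a) && (k <= b))
        multichoose (e N'.+1) k * trunc_coef e N' (a - N'.+1 * k) (b - k)
  end.

(* c e i j = coefficient of x^i y^j in prod_{i>=1} (1 - x^i y)^{-e_i}.
   Factors with index > i contribute only 1 to the x^i coefficient, so it
   equals the coefficient in the finite product over indices 1..i. *)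
Definition c (e : nat -> nat) (i j : nat) : nat := trunc_coef e i i j.

From HB Require Import structures.
From mathcomp Require Import all_boot zify.
From Stdlib Require Import Reals Lra.

(* A Chernoff bound with [y = 3 / 2].  Every [j > m] has weight [y ^ j >= y ^ m],
   so [y ^ m * sum_(j > m) c_(n,j) <= sum_j c_(n,j) y ^ j <= q ^ n * F (1 / q, y)]
   where [F (x, y) = prod_(i <= n) (1 - x ^ i y) ^ (- e_i)] has non-negative
   coefficients.  From [1 / (1 - z) <= exp (z / (1 - z))] and [e_i <= a2 q ^ i / i]
   one gets [F (1 / q, 3 / 2) <= exp (6 a2 H_n) <= exp (6 a2) n ^ (6 a2)].  The whole row
   sum is at least [c_(n,1) >= e_n >= a1 q ^ n / n], so the ratio is at most
   [exp (6 a2) n ^ (1 + 6 a2) / a1 * (3 / 2) ^ (- m)], which is [<= n ^ C (3 / 2) ^ (- m)]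
   for [n >= 2]; the case [n = 1] is immediate. *)

Set Implicit Arguments.
Unset Strict Implicit.
Unset Printing Implicit Defensive.

Local Open Scope R_scope.

HB.instance Definition _ := Monoid.isComLaw.Build R 0 Rplus
  (fun x y z => esym (Rplus_assoc x y z)) Rplus_comm Rplus_0_l.
HB.instance Definition _ := Monoid.isComLaw.Build R 1 Rmult
  (fun x y z => esym (Rmult_assoc x y z)) Rmult_comm Rmult_1_l.
HB.instance Definition _ := Monoid.isMulLaw.Build R 0 Rmult Rmult_0_l Rmult_0_r.
HB.instance Definition _ :=
  Monoid.isAddLaw.Build R Rmult Rplus Rmult_plus_distr_r Rmult_plus_distr_l.

Local Notation "\rsum_ ( m <= i < n ) F" := (\big[Rplus/0]_(m <= i < n) F)
  (at level 41, F at level 41, i, m, n at level 50).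

Lemma INR_sum I (r : seq I) (P : pred I) (F : I -> nat) :
  INR (\sum_(i <- r | P i) F i) = \big[Rplus/0]_(i <- r | P i) INR (F i).
Proof. exact: (big_morph INR plus_INR). Qed.

Lemma rsum_le I (r : seq I) (P : pred I) (F G : I -> R) :
  (forall i, P i -> F i <= G i) ->
  \big[Rplus/0]_(i <- r | P i) F i <= \big[Rplus/0]_(i <- r | P i) G i.
Proof. by move=> FG; apply: (big_ind2 Rle) => // *; lra. Qed.

Lemma rsum_ge0 I (r : seq I) (P : pred I) (F : I -> R) :
  (forall i, P i -> 0 <= F i) -> 0 <= \big[Rplus/0]_(i <- r | P i) F i.
Proof. by move=> F0; apply: (big_ind (fun x => 0 <= x)) => // *; lra. Qed.

Lemma rsum_nat_widen (f : nat -> R) (n m : nat) : (n <= m)%nat ->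
  (forall i, 0 <= f i) -> \rsum_(0 <= i < n) f i <= \rsum_(0 <= i < m) f i.
Proof.
move=> le_nm f0; rewrite (big_cat_nat (leq0n n) le_nm) /=.
have := @rsum_ge0 _ (index_iota n m) xpredT f (fun i _ => f0 i); lra.
Qed.

Lemma rsum_nat_shift (f : nat -> R) (k B : nat) :
  \rsum_(0 <= b < B) (if (k <= b)%nat then f (b - k)%nat else 0) =
  \rsum_(0 <= b < B - k) f b.
Proof.
elim: B => [|B IH]; first by rewrite sub0n !big_geq.
rewrite big_nat_recr //= IH; case: (leqP k B) => [le_kB | lt_Bk].
  by rewrite subSn // big_nat_recr //=; lra.
have /eqP -> : (B.+1 - k == 0)%nat by rewrite subn_eq0.
have /eqP -> : (B - k == 0)%nat by rewrite subn_eq0 ltnW.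
rewrite big_geq //; lra.
Qed.

Lemma pow_mul_rsum_tail_le (f : nat -> R) (y : R) (m n : nat) :
  1 <= y -> (forall j, 0 <= f j) ->
  y ^ m * (\rsum_(m.+1 <= j < n) f j) <= \rsum_(0 <= j < n) f j * y ^ j.
Proof.
move=> y1 f0; have fy0 j : 0 <= f j * y ^ j by apply: Rmult_le_pos; [|apply: pow_le; lra].
case: (ltnP n m.+1) => [lt_nm | le_mn].
  rewrite big_geq ?(ltnW lt_nm) // Rmult_0_r.
  exact: rsum_ge0.
rewrite (big_cat_nat (leq0n m.+1) le_mn) /= big_distrr /=.
have := @rsum_ge0 _ (index_iota 0 m.+1) xpredT _ (fun j _ => fy0 j).
suff : \rsum_(m.+1 <= j < n) y ^ m * f j <= \rsum_(m.+1 <= j < n) f j * y ^ j by lra.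
rewrite big_nat_cond [X in _ <= X]big_nat_cond; apply: rsum_le => j /andP[/andP[le_mj _] _].
rewrite Rmult_comm; apply: Rmult_le_compat_l => //.
by apply: Rle_pow => //; apply/ssrnat.leP; rewrite ltnW.
Qed.

Lemma exp_le_compat x y : x <= y -> exp x <= exp y.
Proof. by case=> [lt_xy | ->]; [left; exact: exp_increasing | right]. Qed.

Lemma ln_le_compat x y : 0 < x -> x <= y -> ln x <= ln y.
Proof. by move=> x0; case=> [lt_xy | ->]; [left; exact: ln_increasing | right]. Qed.

Lemma exp_pow x n : exp x ^ n = exp (INR n * x).
Proof.
elim: n => [|n IH]; first by rewrite /= Rmult_0_l exp_0.
by rewrite S_INR /= IH -exp_plus; f_equal; ring.
Qed.

(* [1 + w <= exp w] at [w = z / (1 - z)]. *)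
Lemma inv_one_sub_le_exp z : z < 1 -> / (1 - z) <= exp (z / (1 - z)).
Proof.
move=> z1; apply: Rle_trans (exp_ineq1_le _); right; field; lra.
Qed.

Lemma inv_succ_le_ln_diff x : 0 < x -> / (x + 1) <= ln (x + 1) - ln x.
Proof.
move=> x0.
have ratio0 : 0 < x / (x + 1) by apply: Rdiv_lt_0_compat; lra.
have : x / (x + 1) <= exp (- / (x + 1)).
  by apply: Rle_trans (exp_ineq1_le _); right; field; lra.
have x1 : 0 < x + 1 by lra.
move/(ln_le_compat ratio0); rewrite ln_exp /Rdiv ln_mult ?ln_Rinv //; last exact: Rinv_0_lt_compat.
lra.
Qed.

Definition harmonic (n : nat) : R := \rsum_(1 <= i < n.+1) / INR i.

Lemma harmonic0 : harmonic 0 = 0.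
Proof. by rewrite /harmonic big_geq. Qed.

Lemma harmonic_ge0 n : 0 <= harmonic n.
Proof.
rewrite /harmonic big_nat_cond; apply: rsum_ge0 => i /andP[/andP[i_ge1 _] _].
by apply: Rlt_le; apply: Rinv_0_lt_compat; apply: lt_0_INR; apply/ssrnat.ltP.
Qed.

Lemma harmonic_le_1_ln n : (1 <= n)%nat -> harmonic n <= 1 + ln (INR n).
Proof.
case: n => [//|n] _; elim: n => [|n IH].
  by rewrite /harmonic big_nat1 /= ln_1; lra.
rewrite /harmonic big_nat_recr //= -/(harmonic n.+1).
have := inv_succ_le_ln_diff (lt_0_INR n.+1 (Nat.lt_0_succ n)).
rewrite -S_INR; lra.
Qed.

Lemma multichoose0 e : multichoose e 0 = 1%nat.
Proof. by rewrite /multichoose bin0. Qed.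

Lemma multichoose0S k : multichoose 0 k.+1 = 0%nat.
Proof. by rewrite /multichoose add0n subn1 /= bin_small. Qed.

Lemma multichoose1 e : multichoose e 1 = e.
Proof. by rewrite /multichoose addn1 subn1 /= bin1. Qed.

Lemma multichooseSS e k :
  multichoose e.+1 k.+1 = (multichoose e.+1 k + multichoose e k.+1)%nat.
Proof.
rewrite /multichoose.
have -> : (e.+1 + k.+1 - 1 = (e + k).+1)%nat by lia.
have -> : (e.+1 + k - 1 = e + k)%nat by lia.
have -> : (e + k.+1 - 1 = e + k)%nat by lia.
by rewrite binS addnC.
Qed.

(* Induction on [e]: multiplying the series of [(1 - z) ^ (- e - 1)] by [1 - z]
   gives the series of [(1 - z) ^ (- e)]. *)
Lemma multichoose_series_le (z : R) (e K : nat) : 0 <= z < 1 ->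
  \rsum_(0 <= k < K) INR (multichoose e k) * z ^ k <= (/ (1 - z)) ^ e.
Proof.
move=> [z0 z1]; have inv_ge1 : 1 <= / (1 - z).
  by rewrite -Rinv_1; apply: Rinv_le_contravar; lra.
elim: e K => [|e IH] K.
  case: K => [|K]; first by rewrite big_geq //=; lra.
  rewrite big_nat_recl // multichoose0 big1 /= => [|i _]; last by rewrite multichoose0S /=; ring.
  lra.
case: K => [|K].
  by rewrite big_geq //; apply: pow_le; lra.
set A := fun K => \rsum_(0 <= k < K) INR (multichoose e.+1 k) * z ^ k.
change (A K.+1 <= (/ (1 - z)) ^ e.+1).
have A_rec : A K.+1 = z * A K + \rsum_(0 <= k < K.+1) INR (multichoose e k) * z ^ k.
  rewrite /A !big_nat_recl // !multichoose0.
  under eq_bigr do rewrite multichooseSS plus_INR.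
  rewrite (eq_bigr (fun i => z * (INR (multichoose e.+1 i) * z ^ i)
                             + INR (multichoose e i.+1) * z ^ i.+1)) => [|i _ /=]; last by ring.
  rewrite big_split /= -big_distrr /=; ring.
have A_mono : A K <= A K.+1.
  by apply: rsum_nat_widen => // i; apply: Rmult_le_pos; [apply: pos_INR | apply: pow_le].
have : (1 - z) * A K.+1 <= (/ (1 - z)) ^ e.
  have := IH K.+1; have : z * A K <= z * A K.+1 by apply: Rmult_le_compat_l.
  lra.
move=> h; apply: (Rmult_le_reg_l (1 - z)); first lra.
by rewrite /= -Rmult_assoc Rinv_r; lra.
Qed.

Lemma trunc_coef_weighted_S (e : nat -> nat) (y : R) (N a B : nat) :
  \rsum_(0 <= b < B) INR (trunc_coef e N.+1 a b) * y ^ b =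
  \big[Rplus/0]_(0 <= k < a.+1 | (N.+1 * k <= a)%nat)
     (INR (multichoose (e N.+1) k) * y ^ k *
      \rsum_(0 <= b < B - k) INR (trunc_coef e N (a - N.+1 * k) b) * y ^ b).
Proof.
rewrite /=; under eq_bigr do rewrite INR_sum big_mkcond /= (big_distrl (y ^ _)) /=.
rewrite exchange_big /= [RHS]big_mkcond /=; apply: eq_bigr => k _.
case: ifP => [le_ka | _] /=; last by rewrite big1 // => b _; ring.
rewrite -(rsum_nat_shift (fun b => INR (trunc_coef e N (a - N.+1 * k) b) * y ^ b)).
rewrite big_distrr /=; apply: eq_bigr => b _.
case: (leqP k b) => [le_kb | _] /=; last by ring.
have -> : y ^ b = y ^ k * y ^ (b - k) by rewrite -pow_add plusE subnKC.
rewrite mult_INR; ring.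
Qed.

Section EulerProduct.

Variables (Q y : R) (e : nat -> nat).
Hypotheses (Q_ge1 : 1 <= Q) (y_ge0 : 0 <= y) (y_lt_Q : y < Q).

(* The value of [prod_(i <= N) (1 - x ^ i y) ^ (- e i)] at [x = 1 / Q]. *)
Definition euler_prod (N : nat) : R :=
  \big[Rmult/1]_(1 <= i < N.+1) (/ (1 - y / Q ^ i)) ^ e i.

Lemma euler_prod0 : euler_prod 0 = 1.
Proof. by rewrite /euler_prod big_geq. Qed.

Lemma euler_prod_S N :
  euler_prod N.+1 = euler_prod N * (/ (1 - y / Q ^ N.+1)) ^ e N.+1.
Proof. by rewrite /euler_prod big_nat_recr. Qed.

Lemma div_pow_le i : (1 <= i)%nat -> 0 <= y / Q ^ i <= y / Q.
Proof.
move=> i_ge1; have Qi_ge_Q : Q <= Q ^ i.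
  by rewrite -{1}(pow_1 Q); apply: Rle_pow => //; apply/ssrnat.leP.
split; first by apply: Rmult_le_pos => //; apply: Rlt_le; apply: Rinv_0_lt_compat; lra.
by apply: Rmult_le_compat_l => //; apply: Rinv_le_contravar; lra.
Qed.

Lemma div_lt_1 : y / Q < 1.
Proof. by apply: (Rmult_lt_reg_r Q); [lra | rewrite /Rdiv Rmult_assoc Rinv_l; lra]. Qed.

Lemma euler_prod_gt0 N : 0 < euler_prod N.
Proof.
rewrite /euler_prod big_nat_cond.
apply: (big_ind (fun x => 0 < x)) => [|x x' ? ?|i /andP[/andP[i_ge1 _] _]]; first lra.
  exact: Rmult_lt_0_compat.
have := div_pow_le i_ge1; have := div_lt_1 => ? ?.
by apply: pow_lt; apply: Rinv_0_lt_compat; lra.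
Qed.

Lemma trunc_coef0_weighted_le a B :
  \rsum_(0 <= b < B) INR (trunc_coef e 0 a b) * y ^ b <= Q ^ a.
Proof.
have Qa_ge1 : 1 <= Q ^ a by apply: pow_R1_Rle.
case: B => [|B]; first by rewrite big_geq //; lra.
rewrite big_nat_recl // big1 /= => [|b _]; last by rewrite andbF /=; ring.
by case: (a == 0%nat) => /=; lra.
Qed.

(* Coefficientwise: [[x ^ a] F <= Q ^ a * F (1 / Q)] for a series [F] with
   non-negative coefficients, here with [y] already substituted. *)
Lemma trunc_coef_weighted_le N a B :
  \rsum_(0 <= b < B) INR (trunc_coef e N a b) * y ^ b <= Q ^ a * euler_prod N.
Proof.
have Qa_ge1 k : 1 <= Q ^ k by apply: pow_R1_Rle.
elim: N a B => [|N IH] a B; first by rewrite euler_prod0 Rmult_1_r; exact: trunc_coef0_weighted_le.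
have [z0 zQ] := div_pow_le (ltn0Sn N); have z1 := div_lt_1.
set z := y / Q ^ N.+1 in z0 zQ *.
have QaEN0 : 0 <= Q ^ a * euler_prod N.
  by apply: Rmult_le_pos; [have := Qa_ge1 a; lra | apply: Rlt_le; exact: euler_prod_gt0].
have term0 k : 0 <= INR (multichoose (e N.+1) k) * z ^ k.
  by apply: Rmult_le_pos; [apply: pos_INR | apply: pow_le].
rewrite trunc_coef_weighted_S euler_prod_S big_mkcond.
apply: (Rle_trans _ (\rsum_(0 <= k < a.+1)
  INR (multichoose (e N.+1) k) * z ^ k * (Q ^ a * euler_prod N))); last first.
  rewrite -big_distrl.
  apply: Rle_trans (Rmult_le_compat_r _ _ _ QaEN0 (multichoose_series_le _ _ _)) _.
    lra.
  by right; rewrite /z; ring.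
apply: rsum_le => k _; case: ifP => [le_ka | _]; last first.
  exact: Rmult_le_pos (term0 k) QaEN0.
have Qa_split : Q ^ a = Q ^ (a - N.+1 * k) * (Q ^ N.+1) ^ k.
  by rewrite -pow_mult -pow_add multE plusE subnK.
have -> : INR (multichoose (e N.+1) k) * z ^ k * (Q ^ a * euler_prod N) =
  INR (multichoose (e N.+1) k) * y ^ k * (Q ^ (a - N.+1 * k) * euler_prod N).
  have QN0 : Q ^ N.+1 <> 0 by apply: pow_nonzero; lra.
  rewrite Qa_split /z /Rdiv Rpow_mult_distr pow_inv; field; exact: pow_nonzero.
apply: Rmult_le_compat_l; first by apply: Rmult_le_pos; [apply: pos_INR | apply: pow_le].
apply: Rle_trans (IH _ B); apply: rsum_nat_widen; first exact: leq_subr.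
by move=> b; apply: Rmult_le_pos; [apply: pos_INR | apply: pow_le].
Qed.

Lemma euler_factor_le_exp (b : R) i : (1 <= i)%nat ->
  INR (e i) <= b * Q ^ i / INR i ->
  (/ (1 - y / Q ^ i)) ^ e i <= exp (b * (y / (1 - y / Q)) * / INR i).
Proof.
move=> i_ge1 e_le; have [z0 zQ] := div_pow_le i_ge1; have z1 := div_lt_1.
set z := y / Q ^ i in z0 zQ *; set d := 1 - y / Q.
have d0 : 0 < d by rewrite /d; lra.
have i0 : 0 < INR i by apply: lt_0_INR; apply/ssrnat.ltP.
have Qi0 : 0 < Q ^ i by apply: pow_lt; lra.
have zd0 : 0 <= z / (1 - z).
  by apply: Rmult_le_pos z0 _; apply: Rlt_le; apply: Rinv_0_lt_compat; lra.
apply: Rle_trans (pow_incr (/ (1 - z)) (exp (z / (1 - z))) (e i) _) _.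
  by split; [apply: Rlt_le; apply: Rinv_0_lt_compat | apply: inv_one_sub_le_exp]; lra.
rewrite exp_pow; apply: exp_le_compat.
have zd_le : z / (1 - z) <= z / d.
  by apply: Rmult_le_compat_l => //; apply: Rinv_le_contravar => //; rewrite /d; lra.
apply: Rle_trans (Rmult_le_compat _ _ _ _ (pos_INR _) zd0 e_le zd_le) _.
by right; rewrite /z; field; split; lra.
Qed.

Lemma euler_prod_le_exp (b : R) N : 0 <= b ->
  (forall i, (1 <= i)%nat -> INR (e i) <= b * Q ^ i / INR i) ->
  euler_prod N <= exp (b * (y / (1 - y / Q)) * harmonic N).
Proof.
move=> b0 e_le; elim: N => [|N IH].
  by rewrite euler_prod0 harmonic0 Rmult_0_r exp_0; lra.
rewrite euler_prod_S /harmonic big_nat_recr // -/(harmonic N).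
rewrite Rmult_plus_distr_l exp_plus.
apply: Rmult_le_compat => //.
- exact: Rlt_le (euler_prod_gt0 N).
- have [z0 zQ] := div_pow_le (ltn0Sn N); have := div_lt_1 => z1.
  by apply: pow_le; apply: Rlt_le; apply: Rinv_0_lt_compat; lra.
- exact: euler_factor_le_exp (e_le _ (ltn0Sn N)).
Qed.

End EulerProduct.

Lemma trunc_coef00 e N : trunc_coef e N 0 0 = 1%nat.
Proof.
elim: N => [//|N IH] /=.
by rewrite big_mkcond big_nat1 /= muln0 /= multichoose0 subn0 IH.
Qed.

(* The factor [(1 - x ^ n y) ^ (- e n)] alone already contributes
   [e n * x ^ n y] to [c e n 1]. *)
Lemma e_le_c1 e n : (1 <= n)%nat -> (e n <= c e n 1)%nat.
Proof.
case: n => [//|n] _.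
rewrite /c /= big_mkcond big_nat_recl // big_nat_recl //=.
rewrite muln1 leqnn subnn /= trunc_coef00 multichoose1 muln1.
lia.
Qed.

Lemma e_le_row_sum e n : (1 <= n)%nat -> (e n <= \sum_(0 <= j < n.+1) c e n j)%nat.
Proof.
move=> n_ge1; apply: leq_trans (e_le_c1 e n_ge1) _.
case: n n_ge1 => [//|n] _.
by rewrite big_nat_recl // big_nat_recl //; lia.
Qed.

Lemma tail_le_row_sum e n m :
  (\sum_(m.+1 <= j < n.+1) c e n j <= \sum_(0 <= j < n.+1) c e n j)%nat.
Proof.
case: (leqP m.+1 n.+1) => [le_mn | lt_nm]; last by rewrite big_geq // ltnW.
by rewrite (big_cat_nat (leq0n m.+1) le_mn) /= leq_addl.
Qed.

Lemma c_tail_ratio_le_small e n m (D : R) : (n <= 1)%nat -> (m <= n)%nat -> 0 < D ->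
  0 < INR (\sum_(0 <= j < n.+1) c e n j) ->
  INR (\sum_(m.+1 <= j < n.+1) c e n j) / INR (\sum_(0 <= j < n.+1) c e n j) <= / D ^ m.
Proof.
move=> n_le1 m_le_n D0 row0; case: m m_le_n => [_ | m m_le_n].
  rewrite /= Rinv_1; apply: (Rmult_le_reg_r _ _ _ row0).
  rewrite /Rdiv Rmult_assoc Rinv_l ?Rmult_1_r ?Rmult_1_l; last lra.
  by apply: le_INR; apply/ssrnat.leP; exact: tail_le_row_sum.
rewrite big_geq; last lia.
by rewrite INR_0 /Rdiv Rmult_0_l; apply: Rlt_le; apply: Rinv_0_lt_compat; apply: pow_lt.
Qed.

Lemma c_tail_le (Q y : R) e n m : 1 <= Q -> 1 <= y -> y < Q ->
  y ^ m * INR (\sum_(m.+1 <= j < n.+1) c e n j) <= Q ^ n * euler_prod Q y e n.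
Proof.
move=> Q_ge1 y_ge1 y_lt_Q; rewrite INR_sum.
apply: Rle_trans (pow_mul_rsum_tail_le m n.+1 y_ge1 (fun j => pos_INR (c e n j))) _.
apply: trunc_coef_weighted_le => //; lra.
Qed.

(* The choice [y = 3 / 2] keeps [y / (1 - y / q) <= 6] uniformly in [q >= 2]. *)
Lemma c_tail_le_exp_ln (q : nat) (a2 : R) e n m : (2 <= q)%nat -> 0 <= a2 ->
  (forall i, (1 <= i)%nat -> INR (e i) <= a2 * INR q ^ i / INR i) -> (1 <= n)%nat ->
  (3 / 2) ^ m * INR (\sum_(m.+1 <= j < n.+1) c e n j) <=
  INR q ^ n * exp (6 * a2 * (1 + ln (INR n))).
Proof.
move=> q_ge2 a2_ge0 e_le n_ge1.
have Q2 : 2 <= INR q by apply: (le_INR 2); apply/ssrnat.leP.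
have u_le : 3 / 2 / INR q <= 3 / 4.
  have : 3 / 2 / INR q * INR q = 3 / 2 by field; lra.
  nra.
have r_le6 : 0 <= 3 / 2 / (1 - 3 / 2 / INR q) <= 6.
  have : 3 / 2 / (1 - 3 / 2 / INR q) * (1 - 3 / 2 / INR q) = 3 / 2 by field; lra.
  nra.
apply: Rle_trans (@c_tail_le (INR q) (3 / 2) e n m _ _ _) _; try lra.
apply: Rmult_le_compat_l; first by apply: pow_le; lra.
apply: Rle_trans (euler_prod_le_exp _ _ _ n a2_ge0 e_le) _; try lra.
apply: exp_le_compat; rewrite Rmult_assoc [6 * _]Rmult_comm Rmult_assoc.
apply: Rmult_le_compat_l => //; apply: Rmult_le_compat; try lra.
  exact: harmonic_ge0.
exact: harmonic_le_1_ln.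
Qed.

Lemma mul_exp_ln_le_Rpower (x a b : R) : 2 <= x -> 0 < a -> 0 <= b ->
  x * exp (b * (1 + ln x)) / a <= Rpower x (1 + b + 2 * (b + Rabs (ln a))).
Proof.
move=> x_ge2 a0 b0.
have ln_x : / 2 < ln x by apply: Rlt_le_trans ln_lt_2 _; apply: ln_le_compat; lra.
have -> : x * exp (b * (1 + ln x)) / a = exp (ln x + b * (1 + ln x) - ln a).
  by rewrite /Rminus !exp_plus exp_Ropp !exp_ln //; lra.
rewrite /Rpower; apply: exp_le_compat.
have := Rle_abs (- ln a); rewrite Rabs_Ropp; have := Rabs_pos (ln a).
nra.
Qed.

Lemma div_le_of_bounds (T S L U w : R) :
  0 <= T -> 0 < L -> L <= S -> 0 < w -> w * T <= U -> T / S <= U / L * / w.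
Proof.
move=> T0 L0 LS w0 wTU.
have T_le : T <= U * / w.
  apply: (Rmult_le_reg_l w) => //.
  by have -> : w * (U * / w) = U by field; lra.
apply: Rle_trans (_ : T / L <= _).
  by apply: Rmult_le_compat_l => //; apply: Rinv_le_contravar.
apply: Rle_trans (Rmult_le_compat_r (/ L) _ _ _ T_le) _.
  by apply: Rlt_le; apply: Rinv_0_lt_compat.
by right; rewrite /Rdiv; ring.
Qed.

Local Close Scope R_scope.

Theorem proposition2p3 (a1 a2 : R) (ha1 : (0 < a1)%R) (ha12 : (a1 <= a2)%R) :
  exists (C D : R), (1 < D)%R /\
    forall (q : nat) (e : nat -> nat), (2 <= q)%N ->
      (forall n : nat, (1 <= n)%N ->
         (a1 * INR q ^ n / INR n <= INR (e n) <= a2 * INR q ^ n / INR n)%R) ->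
      forall n m : nat, (1 <= n)%N -> (m <= n)%N ->
        (INR (\sum_(m.+1 <= j < n.+1) c e n j) / INR (\sum_(0 <= j < n.+1) c e n j)
           <= Rpower (INR n) C * / D ^ m)%R.
Proof.
Local Open Scope R_scope.
exists (1 + 6 * a2 + 2 * (6 * a2 + Rabs (ln a1))), (3 / 2); split; first lra.
move=> q e q_ge2 e_bounds n m n_ge1 m_le_n.
have Q2 : 2 <= INR q by apply: (le_INR 2); apply/ssrnat.leP.
have n_pos : 0 < INR n by apply: lt_0_INR; apply/ssrnat.ltP.
have L0 : 0 < a1 * INR q ^ n / INR n.
  by apply: Rdiv_lt_0_compat => //; apply: Rmult_lt_0_compat => //; apply: pow_lt; lra.
have row_ge : a1 * INR q ^ n / INR n <= INR (\sum_(0 <= j < n.+1) c e n j).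
  apply: Rle_trans (proj1 (e_bounds n n_ge1)) _.
  by apply: le_INR; apply/ssrnat.leP; exact: e_le_row_sum.
case: (leqP n 1) => [n_le1 | n_ge2].
  have -> : INR n = 1 by rewrite (_ : n = 1%nat) //; lia.
  rewrite /Rpower ln_1 Rmult_0_r exp_0 Rmult_1_l.
  by apply: c_tail_ratio_le_small => //; lra.
have a2_ge0 : 0 <= a2 by lra.
apply: Rle_trans (div_le_of_bounds (pos_INR _) L0 row_ge (pow_lt _ m _)
  (c_tail_le_exp_ln m q_ge2 a2_ge0 (fun i hi => proj2 (e_bounds i hi)) n_ge1)) _; first lra.
apply: Rmult_le_compat_r; first by apply: Rlt_le; apply: Rinv_0_lt_compat; apply: pow_lt; lra.
have -> : INR q ^ n * exp (6 * a2 * (1 + ln (INR n))) / (a1 * INR q ^ n / INR n) =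
  INR n * exp (6 * a2 * (1 + ln (INR n))) / a1.
  have Qn0 : INR q ^ n <> 0 by apply: pow_nonzero; lra.
  by field; repeat split; lra.
by apply: mul_exp_ln_le_Rpower; [apply: (le_INR 2); apply/ssrnat.leP | | lra].
Qed.
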